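(* Let $\mathcal{P}$ be a probability distribution on $\mathbb{R}$ and let $X$ be a random variable with distribution $\mathcal{P}$. Define $g(p) := \inf\{r \in \mathbb{R} : \mathbb{P}(X \geq r) \leq p\}$ for $0<p<1$. Assume that $\mathbb{E}|X| < \infty$, that $g(p) \to \infty$ as $p \to 0^+$, and that $g$ is slowly varying at zero, i.e. $g(\lambda p)/g(p) \to 1$ as $p \to 0^+$ for every fixed $\lambda > 0$. For $n\in\mathbb{N}$ let $M_n = \max_{1\le i\le n} X_i$, where $X_1,\dots,X_n$ are i.i.d. with distribution $\mathcal{P}$. Then $$\mathbb{E} M_n \geq g(1/n)(1+o(1)) \quad \text{as } n\to\infty.$$ *)

From HB Require Import structures.
From mathcomp Require Import all_boot all_order all_algebra.
From mathcomp Require Import all_classical all_reals all_analysis.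
Set Implicit Arguments. Unset Strict Implicit. Unset Printing Implicit Defensive.
Import Order.TTheory GRing.Theory Num.Theory.
Import numFieldNormedType.Exports.
Local Open Scope classical_set_scope.
Local Open Scope ring_scope.

Definition mutually_independent {d} {T : measurableType d} {R : realType}
    (Pr : probability T R) (X : nat -> {RV Pr >-> R}) : Prop :=
  forall (s : seq nat) (B : nat -> set R), uniq s ->
    (forall i, measurable (B i)) ->
    Pr (\big[setI/setT]_(i <- s) (X i @^-1` B i)) =
    (\prod_(i <- s) Pr (X i @^-1` B i))%E.

Definition has_distribution {d} {T : measurableType d} {R : realType}
    (Pr : probability T R) (X : {RV Pr >-> R}) (P : probability R R) : Prop :=
  forall A : set R, measurable A -> Pr (X @^-1` A) = P A.

Definition upper_quantile {R : realType} (P : probability R R) (p : R) : R :=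
  inf [set r : R | (P [set x : R | (r <= x)%R] <= p%:E)%E].

(** M_n = max_{1<=i<=n} X_i (indices shifted to 0..n-1; meaningful for n >= 1). *)
Definition maxRV {d} {T : measurableType d} {R : realType}
    (Pr : probability T R) (X : nat -> {RV Pr >-> R}) (n : nat) : T -> R :=
  fun t => \big[Num.max/X 0%N t]_(i < n) X i t.

From HB Require Import structures.
From mathcomp Require Import all_boot all_order all_algebra.
From mathcomp Require Import all_classical all_reals all_analysis.
From mathcomp Require Import measurable_realfun.
From mathcomp.algebra_tactics Require Import ring lra.
Set Implicit Arguments.
Unset Strict Implicit.
Unset Printing Implicit Defensive.
Import Order.TTheory GRing.Theory Num.Theory.
Import numFieldNormedType.Exports.
Local Open Scope classical_set_scope.
Local Open Scope ring_scope.

(* Since M_n + |X_0| is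
   nonnegative and at least t on {M_n >= t}, t P(M_n >= t) <= E M_n + E|X|.
   By independence P(M_n >= t) = 1 - P(X < t)^n, and t < g(lam/n) forces
   P(X >= t) > lam/n, so Bernoulli's inequality gives P(M_n >= t) >= lam/(1+lam).
   With lam = 1/eta and t = (1 - 2 eta) g(1/n), slow variation gives
   g(lam/n) >= (1 - eta) g(1/n) > t for large n, and g(1/n) -> oo gives
   E|X| <= eta g(1/n); hence E M_n >= (1 - 4 eta) g(1/n) eventually. *)

Lemma exprn_le_inv_1Dn (R : realFieldType) (q : R) (n : nat) : 0 <= q <= 1 ->
  q ^+ n <= (1 + n%:R * (1 - q))^-1.
Proof.
move=> /andP[q_ge0 q_le1].
have bernoulli : q ^+ n * (1 + n%:R * (1 - q)) <= 1.
  elim: n => [|n IH]; first by rewrite expr0 mul0r addr0 mul1r.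
  have qn_ge0 : 0 <= q ^+ n by exact: exprn_ge0.
  rewrite exprSr -mulrA mulrSr.
  set y := q ^+ n in IH qn_ge0 *; set m := n%:R in IH *.
  have m_ge0 : 0 <= m by [].
  have : 0 <= y * ((1 - q) ^+ 2 * (m + 1)).
    by rewrite mulr_ge0 // mulr_ge0 // ?sqr_ge0 // addr_ge0.
  nra.
have den_gt0 : 0 < 1 + n%:R * (1 - q).
  by rewrite ltr_pwDl // mulr_ge0 // subr_ge0.
by rewrite -[leRHS]mul1r ler_pdivlMr.
Qed.

Lemma cvg_invn_0right (R : realType) : (fun n : nat => n%:R^-1 : R) @ \oo --> 0^'+.
Proof.
move=> A /nbhs_ballP [e /= e0 Ae].
have [N _ HN] := near_infty_natSinv_lt (PosNum e0).
exists N.+1 => // [[|n]] //= nN.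
apply: Ae; last by rewrite invr_gt0 ltr0n.
rewrite /ball /= sub0r normrN ger0_norm ?invr_ge0 ?ler0n //.
exact: HN.
Qed.

Lemma integrable_maxr d (T : measurableType d) (R : realType)
    (mu : {measure set T -> \bar R}) (f g : T -> R) :
  mu.-integrable setT (EFin \o f) -> mu.-integrable setT (EFin \o g) ->
  mu.-integrable setT (EFin \o (f \max g)).
Proof.
move=> intf intg.
have /measurable_EFinP mf := measurable_int _ intf.
have /measurable_EFinP mg := measurable_int _ intg.
have intfg := integrableD measurableT (integrable_abse intf) (integrable_abse intg).
apply: (le_integrable measurableT _ _ intfg).
  exact/measurable_EFinP/measurable_maxr.
move=> t _ /=; rewrite lee_fin [leRHS]ger0_norm ?addr_ge0 //.
by have [_|_] := leP (f t) (g t); rewrite ?lerDr ?lerDl.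
Qed.

Section maximum.
Context {d} {T : measurableType d} {R : realType} {Pr : probability T R}.
Variable X : nat -> {RV Pr >-> R}.

Lemma maxRVE n :
  maxRV X n = \big[(fun f g => f \max g)/(X 0%N : T -> R)]_(i < n) (X i : T -> R).
Proof. by apply/funext => t; rewrite /maxRV /=; elim/big_rec2: _ => // i y f _ ->. Qed.

Lemma maxRV_ge n (i : 'I_n) t : X i t <= maxRV X n t.
Proof. by rewrite /maxRV (big_rem_AC _ _ _ _ (mem_index_enum i)) /= le_max lexx. Qed.

Lemma maxRVS_lt n t s : maxRV X n.+1 t < s <-> forall i, (i < n.+1)%N -> X i t < s.
Proof.
split=> [Mlts i ilt|Xlts].
  exact: le_lt_trans (maxRV_ge (Ordinal ilt) t) Mlts.
rewrite /maxRV; elim/big_ind: _ => [||i _]; last exact: Xlts.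
- exact: Xlts.
- by move=> x y xs ys; rewrite gt_max xs ys.
Qed.

Lemma measurable_maxRV n : measurable_fun setT (maxRV X n).
Proof. by rewrite maxRVE; elim/big_ind: _ => // f g; exact: measurable_maxr. Qed.

Lemma integrable_maxRV n : (forall i, Pr.-integrable setT (EFin \o X i)) ->
  Pr.-integrable setT (EFin \o maxRV X n).
Proof.
by move=> intX; rewrite maxRVE; elim/big_ind: _ => // f g; exact: integrable_maxr.
Qed.

End maximum.

Lemma tail_le_expectationD d (T : measurableType d) (R : realType)
    (Pr : probability T R) (Y h : T -> R) (t : R) :
  Pr.-integrable setT (EFin \o Y) -> Pr.-integrable setT (EFin \o h) ->
  (forall w, 0 <= h w) -> (forall w, 0 <= Y w + h w) -> 0 <= t ->
  (t%:E * Pr [set w | (t <= Y w)%R] <= 'E_Pr[Y] + 'E_Pr[h])%E.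
Proof.
move=> intY inth h_ge0 Yh_ge0 t_ge0.
have /measurable_EFinP mY := measurable_int _ intY.
have mA : measurable [set w | t <= Y w].
  by rewrite -[X in measurable X]setTI -preimage_itvcy; exact: mY.
set A := [set w | t <= Y w] in mA *.
rewrite unlock -integralD_EFin // -(setIT A) -integral_indic //.
rewrite -ge0_integralZl //; last first.
  exact/measurable_EFinP/measurable_indic.
apply: ge0_le_integral => //.
- by move=> w _; rewrite lee_fin mulr_ge0.
- by apply/measurable_EFinP/measurable_funM => //; exact: measurable_indic.
- exact: emeasurable_funD (measurable_int _ intY) (measurable_int _ inth).
move=> w _; rewrite /= -EFinM -EFinD lee_fin indicE.
have [/set_mem tY|_] := boolP (w \in _); last by rewrite mulr0.
by rewrite mulr1 (le_trans tY) // lerDl.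
Qed.

(* The hypothesis [0 < upper_quantile P q] rules out the junk value [inf] takes
   on a set without lower bound. *)
Lemma lt_upper_quantile (R : realType) (P : probability R R) (q t : R) :
  0 < upper_quantile P q -> t < upper_quantile P q ->
  (q%:E < P [set x | (t <= x)%R])%E.
Proof.
move=> g_gt0 t_lt_g; rewrite ltNge; apply/negP => Pt_le_q.
have [lb|nlb] := pselect (has_lbound [set r | (P [set x | (r <= x)%R] <= q%:E)%E]).
  by move: t_lt_g; rewrite ltNge (ge_inf lb Pt_le_q).
by move: g_gt0; rewrite /upper_quantile inf_out ?ltxx //; case.
Qed.

Lemma ge_mul_1Do1 (R : realType) (a : nat -> \bar R) (g : nat -> R) :
  (\forall n \near \oo, 0 < g n) ->
  (forall eps : R, 0 < eps ->
    \forall n \near \oo, (((1 - eps) * g n)%:E <= a n)%E) ->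
  exists e : nat -> R, e @ \oo --> 0 /\
    \forall n \near \oo, ((g n * (1 + e n))%:E <= a n)%E.
Proof.
move=> g_gt0 a_ge.
(* Only a lower bound on [a n] is known, so the relative error is clipped at 0. *)
pose e n := if a n is r%:E then Num.min 0 (r / g n - 1) else 0.
exists e; split.
  apply/cvgr0Pnorm_le => eps eps_gt0; near=> n.
  have gn_gt0 : 0 < g n by near: n.
  have : (((1 - eps) * g n)%:E <= a n)%E by near: n; exact: a_ge.
  rewrite /e; case: (a n) => [r| |] //= => [|_]; last by rewrite normr0 ltW.
  rewrite lee_fin => r_ge; have [_|r_lt] := leP 0 (r / g n - 1).
    by rewrite normr0 ltW.
  by rewrite ltr0_norm // opprB lerBlDr -lerBlDl ler_pdivlMr.
near=> n.
have gn_gt0 : 0 < g n by near: n.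
have : (((1 - 1) * g n)%:E <= a n)%E by near: n; exact: a_ge ltr01.
rewrite subrr mul0r /e; case: (a n) => [r| |] //= r_ge0; last by rewrite leey.
have [r_ge|_] := leP 0 (r / g n - 1).
  by rewrite addr0 mulr1 lee_fin -[g n]mul1r -ler_pdivlMr // -subr_ge0.
by rewrite addrCA subrr addr0 mulrC divfK ?gt_eqF.
Unshelve. all: end_near.
Qed.

Section iid_maximum.
Context d (T : measurableType d) (R : realType) (Pr : probability T R).
Variables (P : probability R R) (X : nat -> {RV Pr >-> R}).
Hypothesis X_P : forall i, has_distribution (X i) P.

Lemma integral_normX i : (\int[Pr]_w (`|X i w|)%:E = \int[P]_x (`|x|)%:E)%E.
Proof.
rewrite [RHS](eq_measure_integral (distribution Pr (X i))); last first.
  by move=> A mA _; apply/esym/X_P.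
rewrite ge0_integral_distribution //.
by apply/measurableT_comp => //; exact: measurableT_comp.
Qed.

Hypothesis P_L1 : (\int[P]_x (`|x|)%:E < +oo)%E.

Lemma integrableX i : Pr.-integrable setT (EFin \o X i).
Proof.
apply/integrableP; split; first exact/measurable_EFinP.
by under eq_integral do rewrite /=; rewrite integral_normX.
Qed.

Lemma expectation_maxRV_ge_tail n t : 0 <= t ->
  (t%:E * Pr [set w | (t <= maxRV X n.+1 w)%R] - \int[P]_x (`|x|)%:E
    <= 'E_Pr[maxRV X n.+1])%E.
Proof.
move=> t_ge0; pose h w := `|X 0%N w|.
have int_h : Pr.-integrable setT (EFin \o h).
  apply/integrableP; split; first exact/measurable_EFinP/measurableT_comp.
  by under eq_integral do rewrite /= normr_id; rewrite integral_normX.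
have Eh : ('E_Pr[h] = \int[P]_x (`|x|)%:E)%E by rewrite unlock integral_normX.
rewrite -Eh leeBlDr; last by rewrite Eh ge0_fin_numE // integral_ge0.
apply: tail_le_expectationD => //.
- exact: integrable_maxRV integrableX.
- by move=> w; rewrite /h normr_ge0.
- move=> w; apply: le_trans (lerD (maxRV_ge X (@ord0 n) w) (lexx (h w))).
  by rewrite addrC -[X in _ + X]opprK subr_ge0 ler_normr lexx orbT.
Qed.

Hypothesis X_indep : mutually_independent X.

Lemma prob_maxRV_lt n t q : P [set x | x < t] = q%:E ->
  Pr [set w | maxRV X n.+1 w < t] = (q ^+ n.+1)%:E.
Proof.
move=> Pq; have mlt : measurable [set x : R | x < t] by rewrite -set_itvNyo.
have -> : [set w | maxRV X n.+1 w < t] =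
    \big[setI/setT]_(0 <= i < n.+1) (X i @^-1` [set x | x < t]).
  rewrite -bigcap_seq; apply/seteqP; split=> w /=.
  - by move/maxRVS_lt => Xlt i /=; rewrite mem_index_iota => /andP[_ /Xlt].
  - by move=> Xlt; apply/maxRVS_lt => i ilt; apply: Xlt; rewrite /= mem_index_iota.
rewrite (@X_indep _ (fun=> [set x | x < t])) ?iota_uniq //.
rewrite (eq_bigr (fun=> q%:E)) => [|i _]; last by rewrite X_P.
by rewrite prodEFin prodr_const_nat subn0.
Qed.

Lemma prob_maxRV_ge_lower n lam t : 0 < lam ->
  0 < upper_quantile P (lam / n.+1%:R) -> t < upper_quantile P (lam / n.+1%:R) ->
  ((lam / (1 + lam))%:E <= Pr [set w | (t <= maxRV X n.+1 w)%R])%E.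
Proof.
move=> lam_gt0 g_gt0 t_lt_g.
have mlt : measurable [set x : R | x < t] by rewrite -set_itvNyo.
have Pq : P [set x | x < t] = (fine (P [set x | x < t]))%:E.
  by rewrite fineK // fin_num_measure.
set q := fine _ in Pq.
have q_ge0 : 0 <= q by rewrite -lee_fin -Pq.
have tail : (lam / n.+1%:R < 1 - q)%R.
  rewrite -lte_fin EFinB -Pq -probability_setC // -set_itvNyo setCitvl set_itvcy.
  exact: lt_upper_quantile.
have -> : [set w | t <= maxRV X n.+1 w] = ~` [set w | maxRV X n.+1 w < t].
  by apply/seteqP; split=> w /=; rewrite leNgt => /negP.
rewrite probability_setC; last first.
  by rewrite -[X in measurable X]setTI -preimage_itvNyo; exact: measurable_maxRV.
rewrite (prob_maxRV_lt n Pq) lee_fin.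
have lam_lt : lam < n.+1%:R * (1 - q) by rewrite mulrC -ltr_pdivrMr ?ltr0n.
have q_le1 : q <= 1.
  by rewrite -subr_ge0 (le_trans _ (ltW tail)) // ltW // divr_gt0 ?ltr0n.
have -> : lam / (1 + lam) = 1 - (1 + lam)^-1 by field; lra.
have q01 : 0 <= q <= 1 by rewrite q_ge0 q_le1.
rewrite lerD2l lerN2 (le_trans (exprn_le_inv_1Dn n.+1 q01)) //.
by rewrite lef_pV2 ?posrE ?lerD2l ?ltW //; lra.
Qed.

Lemma expectation_maxRV_ge n lam t : 0 < lam -> 0 <= t ->
  0 < upper_quantile P (lam / n.+1%:R) -> t < upper_quantile P (lam / n.+1%:R) ->
  ((t * (lam / (1 + lam)))%:E - \int[P]_x (`|x|)%:E <= 'E_Pr[maxRV X n.+1])%E.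
Proof.
move=> lam_gt0 t_ge0 g_gt0 t_lt_g.
apply: le_trans (expectation_maxRV_ge_tail n t_ge0).
apply: leeD2r; rewrite EFinM lee_wpmul2l ?lee_fin //.
exact: prob_maxRV_ge_lower.
Qed.

Lemma expectation_maxRV_ge_scaled_quantile n eta : 0 < eta -> eta <= 1 / 4 ->
  0 < upper_quantile P n.+1%:R^-1 ->
  (1 - eta) * upper_quantile P n.+1%:R^-1 <= upper_quantile P (eta^-1 / n.+1%:R) ->
  (\int[P]_x (`|x|)%:E <= (eta * upper_quantile P n.+1%:R^-1)%:E)%E ->
  (((1 - 4 * eta) * upper_quantile P n.+1%:R^-1)%:E <= 'E_Pr[maxRV X n.+1])%E.
Proof.
set G := upper_quantile P _; set G' := upper_quantile P _.
move=> eta_gt0 eta_le G_gt0 G'_ge int_le.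
have lam_gt0 : 0 < eta^-1 by rewrite invr_gt0.
pose t := (1 - 2 * eta) * G.
have t_ge0 : 0 <= t by rewrite mulr_ge0 ?ltW //; lra.
have t_lt : t < G' by apply: lt_le_trans G'_ge; rewrite ltr_pM2r //; lra.
have G'_gt0 : 0 < G' := le_lt_trans t_ge0 t_lt.
apply: le_trans (expectation_maxRV_ge lam_gt0 t_ge0 G'_gt0 t_lt).
rewrite leeBrDr; last first.
  by rewrite ge0_fin_numE ?(le_lt_trans int_le) ?ltry // integral_ge0.
apply: le_trans (leeD2l _ int_le) _; rewrite -EFinD lee_fin.
have frac_ge : 1 - eta <= eta^-1 / (1 + eta^-1).
  have : eta * eta^-1 = 1 by rewrite mulfV ?gt_eqF.
  rewrite ler_pdivlMr; [nra | lra].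
have := ler_wpM2l t_ge0 frac_ge.
have := mulr_ge0 (mulr_ge0 (ltW eta_gt0) (ltW eta_gt0)) (ltW G_gt0).
rewrite /t; nra.
Qed.

Hypothesis quantile_oo : upper_quantile P p @[p --> 0^'+] --> +oo.
Hypothesis quantile_slow : forall lam : R, 0 < lam ->
  upper_quantile P (lam * p) / upper_quantile P p @[p --> 0^'+] --> (1:R).

Lemma expectation_maxRV_ge_quantile eps : 0 < eps ->
  \forall n \near \oo,
    (((1 - eps) * upper_quantile P n%:R^-1)%:E <= 'E_Pr[maxRV X n])%E.
Proof.
move=> eps_gt0; pose eta := Num.min eps 1 / 4.
have eta_gt0 : 0 < eta by rewrite divr_gt0 // lt_min eps_gt0 ltr01.
have eta_le : eta <= 1 / 4 by rewrite ler_pM2r // ge_min lexx orbT.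
have eta_eps : 4 * eta <= eps by rewrite /eta mulrC divfK // ge_min lexx.
have [c Pc] : exists c : R, (\int[P]_x (`|x|)%:E = c%:E)%E.
  exists (fine (\int[P]_x (`|x|)%:E)).
  by rewrite fineK // ge0_fin_numE // integral_ge0.
have c_ge0 : 0 <= c by rewrite -lee_fin -Pc; exact: integral_ge0.
have lam_gt0 : 0 < eta^-1 by rewrite invr_gt0.
have /cvgrPdist_le/(_ eta eta_gt0) near_ratio := quantile_slow lam_gt0.
have /cvgryPgt/(_ (c / eta)) near_large := quantile_oo.
near=> n.
have n_gt0 : (0 < n)%N by near: n; exists 1%N.
have ratio : `|1 - upper_quantile P (eta^-1 / n%:R) / upper_quantile P n%:R^-1| <= eta.
  by near: n; exact: cvg_invn_0right near_ratio.
have large : c / eta < upper_quantile P n%:R^-1.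
  by near: n; exact: cvg_invn_0right near_large.
move: ratio large; rewrite -(prednK n_gt0) => ratio large.
have G_gt0 : 0 < upper_quantile P n.-1.+1%:R^-1.
  by apply: le_lt_trans large; rewrite divr_ge0 // ltW.
apply: le_trans (expectation_maxRV_ge_scaled_quantile eta_gt0 eta_le G_gt0 _ _).
- by rewrite lee_fin ler_pM2r //; lra.
- move: ratio; rewrite ler_norml => /andP[_]; rewrite lerBlDr -lerBlDl.
  by rewrite ler_pdivlMr.
- by rewrite Pc lee_fin -ler_pdivrMl // mulrC ltW.
Unshelve. all: end_near.
Qed.

End iid_maximum.

Theorem proposition2 (R : realType) (P : probability R R)
  (d : measure_display) (T : measurableType d) (Pr : probability T R)
  (X : nat -> {RV Pr >-> R}) :
  (\int[P]_x (`|x|)%:E < +oo)%E ->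
  upper_quantile P p @[p --> 0^'+] --> +oo ->
  (forall lam : R, 0 < lam ->
     upper_quantile P (lam * p) / upper_quantile P p @[p --> 0^'+] --> (1:R)) ->
  mutually_independent X ->
  (forall i, has_distribution (X i) P) ->
  exists e : nat -> R, e @ \oo --> 0 /\
    \forall n \near \oo,
      ('E_Pr[maxRV X n] >= (upper_quantile P n%:R^-1 * (1 + e n))%:E)%E.
Proof.
move=> P_L1 quantile_oo quantile_slow X_indep X_P.
apply: (@ge_mul_1Do1 _ (fun n => 'E_Pr[maxRV X n])%E
                       (fun n => upper_quantile P n%:R^-1)).
  by have /cvgryPgt/(_ 0) := quantile_oo; exact: cvg_invn_0right.
exact: expectation_maxRV_ge_quantile.
Qed.
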